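(* Let $q$ be a power of a prime $p$, let $k$ be an algebraically closed field of characteristic $p$, $G=\mathrm{GL}_n(k)$, $\mathfrak{g}=\mathfrak{gl}_n(k)$. Let $F:G\to G$ be $F((g_{i,j}))=\big((g^q_{n+1-j,\,n+1-i})\big)^{-1}$ and $F:\mathfrak{g}\to\mathfrak{g}$ be $F((x_{i,j}))=(x^q_{n+1-j,\,n+1-i})$. Fix $\alpha\in\mathbb{F}_{q^2}\setminus\mathbb{F}_q$ and define $s^{-1}:\mathfrak{g}_{\mathrm{nil}}\to G_{\mathrm{uni}}$ by $s^{-1}(x)=(1+\alpha^q x)^{-1}(\alpha x+1)$. If $x\in\mathfrak{g}_{\mathrm{nil}}$ satisfies $F(x)=x$, then $s^{-1}(x)\in G^F=\{g\in G: F(g)=g\}$.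
   Context: $G_{\mathrm{uni}}$ is the set of unipotent elements of $G$ and $\mathfrak{g}_{\mathrm{nil}}$ the set of nilpotent elements of $\mathfrak{g}$; $G^F$ is the finite unitary group $\mathrm{GU}_n(\mathbb{F}_q)$ defined by this $F$. *)

From HB Require Import structures.
From mathcomp Require Import all_boot all_order all_algebra all_field.
Set Implicit Arguments. Unset Strict Implicit. Unset Printing Implicit Defensive.
Import GRing.Theory.
Local Open Scope ring_scope.

(* Frobenius-twisted anti-transpose on gl_n(k):
   F((x_{i,j})) = (x_{n+1-j, n+1-i}^q)  (0-indexed: rev_ord i = n-1-i) *)
Definition Flie (k : fieldType) (n q : nat) (x : 'M[k]_n) : 'M[k]_n :=
  \matrix_(i, j) (x (rev_ord j) (rev_ord i)) ^+ q.

Definition Fgrp (k : fieldType) (n q : nat) (g : 'M[k]_n) : 'M[k]_n :=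
  invmx (Flie q g).

Definition mx_nilpotent (k : fieldType) (n : nat) (x : 'M[k]_n) : Prop :=
  exists m : nat, iter m (mulmx x) 1%:M = 0.

Definition s_inv (k : fieldType) (n q : nat) (alpha : k) (x : 'M[k]_n) : 'M[k]_n :=
  invmx (1%:M + (alpha ^+ q) *: x) *m (alpha *: x + 1%:M).

Definition in_GF (k : fieldType) (n q : nat) (g : 'M[k]_n) : Prop :=
  g \in unitmx /\ Fgrp q g = g.

From HB Require Import structures.
From mathcomp Require Import all_boot all_order all_algebra all_field.
Set Implicit Arguments. Unset Strict Implicit. Unset Printing Implicit Defensive.
Local Open Scope ring_scope.
Import GRing.Theory.

(* The Lie-algebra map F is a Frobenius-semilinear ring anti-automorphism of
   gl_n.  Write s^{-1}(x) = A^{-1} B with A = 1 + alpha^q x and B = 1 + alpha x;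
   both are units (x is nilpotent) and commute (they are polynomials in x).
   If F(x) = x and alpha^{q^2} = alpha then F swaps A and B, so the group map
   sends A^{-1} B to (F(B) F(A)^{-1})^{-1} = (A B^{-1})^{-1} = B A^{-1} = A^{-1} B. *)

Lemma mx_nilpotent_exp (k : fieldType) (n : nat) (x : 'M[k]_n.+1) :
  mx_nilpotent x -> exists m, x ^+ m = 0.
Proof.
case=> m xm; exists m; rewrite -xm.
by elim: m {xm} => [|m IHm] //=; rewrite exprS IHm.
Qed.

(* The inverse of 1 + y is the truncated geometric series of -y. *)
Lemma unitmx_1Dnil (R : comUnitRingType) (n m : nat) (y : 'M[R]_n.+1) :
  y ^+ m = 0 -> 1 + y \is a GRing.unit.
Proof.
move=> ym; have := subrX1 (- y) m.
rewrite exprNn ym mulr0 sub0r -opprD addrC mulNr => /oppr_inj geom.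
by have [] := @mulmx1_unit _ _ (1 + y) _ (esym geom).
Qed.

Section FrobeniusTwist.
Variables (k : fieldType) (q : nat).
Hypothesis frobD : forall u v : k, (u + v) ^+ q = u ^+ q + v ^+ q.

Lemma frob0 : (0 : k) ^+ q = 0.
Proof. by apply: (addrI (0 ^+ q)); rewrite -frobD !addr0. Qed.

Lemma frob_sum (I : Type) (r : seq I) (P : pred I) (F : I -> k) :
  (\sum_(i <- r | P i) F i) ^+ q = \sum_(i <- r | P i) F i ^+ q.
Proof. exact: (big_morph (fun u : k => u ^+ q) frobD frob0). Qed.

Lemma FlieD (n : nat) (A B : 'M[k]_n) : Flie q (A + B) = Flie q A + Flie q B.
Proof. by apply/matrixP => i j; rewrite !mxE frobD. Qed.

Lemma FlieZ (n : nat) c (A : 'M[k]_n) : Flie q (c *: A) = c ^+ q *: Flie q A.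
Proof. by apply/matrixP => i j; rewrite !mxE exprMn. Qed.

Lemma Flie1 (n : nat) : Flie q (1%:M : 'M[k]_n) = 1%:M.
Proof.
apply/matrixP => i j; rewrite !mxE (inj_eq rev_ord_inj) eq_sym.
by case: (i == j); rewrite ?expr1n ?frob0.
Qed.

Lemma FlieM (n : nat) (A B : 'M[k]_n) : Flie q (A *m B) = Flie q B *m Flie q A.
Proof.
apply/matrixP => i j; rewrite !mxE frob_sum [RHS](reindex_inj rev_ord_inj).
by apply: eq_bigr => l _; rewrite !mxE rev_ordK exprMn mulrC.
Qed.

Lemma FlieV (n : nat) (A : 'M[k]_n.+1) :
  A \is a GRing.unit -> Flie q A^-1 = (Flie q A)^-1.
Proof.
move=> uA; have FAV : Flie q A * Flie q A^-1 = 1.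
  by rewrite -mulmxE -FlieM mulmxE mulVr // Flie1.
have [uFA _] := mulmx1_unit FAV.
by rewrite -[LHS]mul1r -(mulVr uFA) -mulrA FAV mulr1.
Qed.

Variables (n m : nat) (alpha : k) (x : 'M[k]_n.+1).
Hypothesis x_nil : x ^+ m = 0.

Let A := 1 + alpha ^+ q *: x.
Let B := 1 + alpha *: x.

Lemma s_invE : s_inv q alpha x = A^-1 * B.
Proof. by rewrite /s_inv [alpha *: x + _]addrC. Qed.

Lemma unitr_1Dscale (c : k) : 1 + c *: x \is a GRing.unit.
Proof. by apply: (@unitmx_1Dnil _ _ m); rewrite exprZn x_nil scaler0. Qed.

Lemma comm_1Dscale (c d : k) : GRing.comm (1 + c *: x) (1 + d *: x).
Proof.
apply: commrD; first exact: commr1.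
apply/commr_sym/commrD; first exact: commr1.
by rewrite /GRing.comm -!scalerAl -!scalerAr !scalerA mulrC.
Qed.

Hypothesis Fx : Flie q x = x.
Hypothesis alpha_q2 : alpha ^+ (q ^ 2) = alpha.

Lemma Flie_swap : Flie q A = B /\ Flie q B = A.
Proof. by rewrite /A /B !FlieD !FlieZ Fx Flie1 -exprM mulnn alpha_q2. Qed.

Lemma Fgrp_s_inv : Fgrp q (s_inv q alpha x) = s_inv q alpha x.
Proof.
have [FA FB] := Flie_swap.
have [uA uB] := (unitr_1Dscale (alpha ^+ q), unitr_1Dscale alpha).
rewrite s_invE /Fgrp -[invmx _]/((Flie q (A^-1 *m B))^-1).
rewrite FlieM FlieV // FA FB mulmxE invrM ?unitrV // invrK.
exact: commrV (comm_1Dscale _ _).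
Qed.

End FrobeniusTwist.

Theorem mainTheorem3 (k : closedFieldType) (p e : nat) (n : nat) (alpha : k)
  (x : 'M[k]_n) :
  prime p -> (p \in [pchar k])%N -> (0 < e)%N ->
  let q := (p ^ e)%N in
  alpha ^+ (q ^ 2) = alpha -> alpha ^+ q != alpha ->
  mx_nilpotent x -> Flie q x = x ->
  in_GF q (s_inv q alpha x).
Proof.
move=> p_pr pchar_p _ q alpha_q2 _ x_nil Fx.
have frobD (u v : k) : (u + v) ^+ q = u ^+ q + v ^+ q.
  by apply: exprDn_pchar; rewrite /q pnatX (pnatE _ p_pr) pchar_p.
case: n x x_nil Fx => [|n] x x_nil Fx.
  split; first by rewrite unitmxE det_mx00 unitr1.
  by rewrite [LHS]flatmx0 [RHS]flatmx0.
have [m xm] := mx_nilpotent_exp x_nil.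
split; last exact: (Fgrp_s_inv frobD xm Fx alpha_q2).
by rewrite -[_ \in unitmx]/(_ \is a GRing.unit) s_invE unitrMr ?unitrV
  ?(unitr_1Dscale xm).
Qed.
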